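(* Let $L/K$ be a nontrivial finite extension inside $\bar K$, and let $N$ be the unique intermediate field $K\subseteq N\subseteq L$ such that $L/N$ is Galois of degree $r_K(L)$. Suppose $L=K(\alpha)$ where $\alpha$ has minimal polynomial $f$ over $K$ with $r_K(f)=r$, and let $\alpha=\alpha_1,\alpha_2,\dots,\alpha_r$ be the roots of $f$ contained in $L$. Then $N=K(t_1,t_2,\dots,t_r)$, where $t_1,\dots,t_r$ are the elementary symmetric polynomials evaluated at $\alpha_1,\dots,\alpha_r$.
   Context: $K$ is a perfect field with a fixed algebraic closure $\bar K$. For an irreducible $f\in K[t]$ and a root $\alpha$, the cluster size $r_K(f)$ is the number of roots of $f$ lying in $K(\alpha)$; for $L=K(\alpha)$, $r_K(L)=r_K(f)$ (independent of the choice of primitive element; equals $|{\rm Aut}(L/K)|$). The existence and uniqueness of the intermediate field $N$ with $L/N$ Galois of degree $r_K(L)$ is known (it is $N=L^{{\rm Aut}(L/K)}$). *)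

From HB Require Import structures.
From mathcomp Require Import all_boot all_order all_algebra all_fingroup all_field.
Set Implicit Arguments. Unset Strict Implicit. Unset Printing Implicit Defensive.
Import GRing.Theory.
Local Open Scope ring_scope.

Definition perfect_subfield (F0 : fieldType) (Om : fieldExtType F0)
    (K : {subfield Om}) : Prop :=
  forall p : nat, p \in [pchar Om] ->
    forall x, x \in K -> exists2 y, y \in K & x = y ^+ p.

Definition elem_sym (R : comNzRingType) (s : seq R) (k : nat) : R :=
  \sum_(I : {set 'I_(size s)} | #|I| == k) \prod_(i in I) s`_i.

From HB Require Import structures.
From mathcomp Require Import all_boot all_order all_algebra all_fingroup all_field.
Import GRing.Theory.
Local Open Scope ring_scope.

(* The polynomial g = prod_(x in s) ('X - x) has the elementary symmetric
   values of s as its coefficients, up to sign, and its roots are stable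
   under Gal(L/N); hence K(t_1, ..., t_r) is contained in N = L^Gal(L/N).
   Conversely alpha is a root of g, which has degree r = [L : N] and
   coefficients in K(t_1, ..., t_r), so [L : K(t_1, ..., t_r)] <= [L : N]. *)

Section ElementarySymmetric.

Context {R : comNzRingType}.

Lemma coef_prod_XsubC_elem_sym (s : seq R) k : (k <= size s)%N ->
  (\prod_(x <- s) ('X - x%:P))`_(size s - k) = (-1) ^+ k * elem_sym s k.
Proof. by move=> le_k_s; rewrite coef_prod_XsubC ?leq_subr // subKn. Qed.

Lemma prod_XsubC_polyOverP (S : subringClosed R) (s : seq R) :
  reflect (forall k, (0 < k <= size s)%N -> elem_sym s k \in S)
          (\prod_(x <- s) ('X - x%:P) \is a polyOver S).
Proof.
apply: (iffP polyOverP) => [Sg k /andP[k_gt0 le_k_s] | Ses i].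
  by rewrite -(rpredMsign S k) -coef_prod_XsubC_elem_sym.
have [lt_i_s | le_s_i] := ltnP i (size s).
  rewrite -(subKn (ltnW lt_i_s)) coef_prod_XsubC_elem_sym ?leq_subr //.
  by rewrite rpredMsign Ses // subn_gt0 lt_i_s leq_subr.
have [-> | lt_s_i] := eqVneq i (size s); last first.
  by rewrite nth_default ?rpred0 // size_prod_XsubC ltn_neqAle eq_sym lt_s_i.
have /monicP := monic_prod_XsubC s xpredT id.
by rewrite /lead_coef size_prod_XsubC => ->; rewrite rpred1.
Qed.

End ElementarySymmetric.

Section GaloisStableRoots.

Context {F0 : fieldType} {L : splittingFieldType F0}.
Context {K E : {subfield L}} {p : {poly L}} {s : seq L}.
Hypotheses (pK : p \is a polyOver K) (s_uniq : uniq s).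
Hypothesis s_roots : forall y, (y \in s) = (y \in E) && root p y.

Lemma gal_perm_roots x : (K <= E)%VS -> x \in 'Gal(E / K)%g ->
  perm_eq (map x s) s.
Proof.
move=> sKE galx.
have xs_uniq : uniq (map x s) by rewrite (map_inj_uniq (fmorph_inj _)).
suff xs_s : {subset map x s <= s}.
  have := uniq_min_size xs_uniq xs_s; rewrite size_map => /(_ (leqnn _))[_ xs_eq_s].
  exact: uniq_perm.
move=> _ /mapP[y ys ->]; move: ys; rewrite !s_roots => /andP[Ey py].
rewrite memv_gal //= -(fixedPoly_gal sKE galx pK).
by rewrite /root horner_map /= (eqP py) rmorph0.
Qed.

Lemma prod_XsubC_roots_polyOver (N : {subfield L}) :
  (K <= N)%VS -> galois N E -> \prod_(x <- s) ('X - x%:P) \is a polyOver N.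
Proof.
move=> sKN galNE; have sNE : (N <= E)%VS by case/andP: galNE.
have gE : \prod_(x <- s) ('X - x%:P) \is a polyOver E.
  by rewrite big_seq rpred_prod // => y; rewrite polyOverXsubC s_roots => /andP[].
apply/polyOverP => i; rewrite -(galois_fixedField galNE).
apply/fixedFieldP => [|x galNx]; first exact: (polyOverP gE).
have galKx : x \in 'Gal(E / K)%g by apply: subsetP (galS E sKN) x galNx.
rewrite -coef_map map_prod_XsubC -(big_map x xpredT (fun y => 'X - y%:P)).
by rewrite (perm_big _ (gal_perm_roots _ (subv_trans sKN sNE) galKx)).
Qed.

End GaloisStableRoots.

Lemma subfield_eq_adjoin_root {F0 : fieldType} {L : fieldExtType F0}
    {M N : {subfield L}} {a : L} {g : {poly L}} :
  (M <= N)%VS -> (N <= <<M; a>>)%VS -> g \is a polyOver M -> g != 0 ->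
  root g a -> ((size g).-1 <= \dim_N <<M; a>>)%N -> N = M :> {vspace L}.
Proof.
move=> sMN sNMa gM g_neq0 ga le_g_dim.
have le_deg_g : (adjoin_degree M a <= (size g).-1)%N.
  by rewrite -ltnS -size_minPoly prednK ?size_poly_gt0 // dvdp_leq // minPoly_dvdp.
have dimMa : \dim <<M; a>> = (\dim_N <<M; a>> * \dim N)%N.
  by rewrite divnK // field_dimS.
have dim_gt0 : (0 < \dim_N <<M; a>>)%N.
  by rewrite divn_gt0 ?adim_gt0 // dimvS.
apply/eqP; rewrite eq_sym eqEdim sMN /= -(leq_pmul2l dim_gt0) -dimMa.
by rewrite {1}dim_Fadjoin leq_mul2r (leq_trans le_deg_g le_g_dim) orbT.
Qed.

Theorem proposition7p4 (F0 : fieldType) (Om : splittingFieldType F0)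
    (K : {subfield Om}) (alpha : Om) (N : {subfield Om}) (s : seq Om) :
  perfect_subfield K ->
  alpha \notin K ->
  uniq s ->
  head 0 s = alpha ->
  (forall x, (x \in s) = (x \in <<K; alpha>>%VS) && root (minPoly K alpha) x) ->
  (K <= N)%VS -> (N <= <<K; alpha>>)%VS ->
  galois N <<K; alpha>> ->
  \dim_N <<K; alpha>> = size s ->
  (N : {vspace Om}) = <<K & [seq elem_sym s k | k <- iota 1 (size s)]>>%VS.
Proof.
(* Perfectness of K, alpha \notin K and head 0 s = alpha only matter for the
   existence of N and the nontriviality of L/K; they are not used here. *)
move=> _ _ s_uniq _ s_roots sKN sNL galNL dimNL.
pose M := <<K & [seq elem_sym s k | k <- iota 1 (size s)]>>%AS.
set g := \prod_(x <- s) ('X - x%:P).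
have gN : g \is a polyOver N.
  exact: prod_XsubC_roots_polyOver (minPolyOver K alpha) s_uniq s_roots N sKN galNL.
have sMN : (M <= N)%VS.
  apply/Fadjoin_seqP; split=> // t /mapP[k]; rewrite mem_iota add1n ltnS => k_s ->.
  by move/prod_XsubC_polyOverP: gN; apply.
have gM : g \is a polyOver M.
  apply/prod_XsubC_polyOverP => k k_s; apply: seqv_sub_adjoin.
  by apply: map_f; rewrite mem_iota add1n ltnS.
have alpha_s : alpha \in s by rewrite s_roots memv_adjoin root_minPoly.
have MaL : <<M; alpha>>%VS = <<K; alpha>>%VS.
  apply/eqP; rewrite eqEsubv (adjoinSl _ (subv_adjoin_seq _ _)) andbT.
  by apply/FadjoinP; rewrite memv_adjoin (subv_trans sMN sNL).
have g_neq0 : g != 0 by rewrite monic_neq0 ?monic_prod_XsubC.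
have g_alpha : root g alpha by rewrite root_prod_XsubC.
apply: (subfield_eq_adjoin_root sMN _ gM g_neq0 g_alpha); rewrite MaL //.
by rewrite size_prod_XsubC dimNL.
Qed.
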